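(* Let $a_1,\ldots,a_k$ be positive integers, $A=\sum_{j=1}^k a_j$, $n=k+3$, and $v=[4A+2;\,8a_1,\ldots,8a_k,\,1,\,1,\,1]$ (players $1,\ldots,n$). Let $v_{\&\{n-1,n\}}$ be the game in which players $n-1$ and $n$ merge into one player $\&\{n-1,n\}$ of weight $2$. Then $\phi_{\&\{n-1,n\}}(v_{\&\{n-1,n\}})>\phi_{n-1}(v)+\phi_n(v)$ if and only if there is a set $P\subseteq\{1,\ldots,k\}$ with $\sum_{j\in P}a_j=\sum_{j\notin P}a_j$.
   Context: A weighted voting game $[q;w_1,\ldots,w_n]$ has players $1,\ldots,n$ with nonnegative weights and quota $q$, $0<q\le\sum_jw_j$; $v(S)=1$ iff $\sum_{j\in S}w_j\ge q$, else $0$. The Shapley–Shubik index of player $j$ in a game with player set $M$, $|M|=m$, is $\phi_j=\frac{1}{m!}\sum_{X\subseteq M,\,j\in X}(|X|-1)!\,(m-|X|)!\,(v(X)-v(X\setminus\{j\}))$. Merging a set $T$ of players yields the WVG with the same quota in which the players of $T$ are replaced by a single player $\&T$ of weight $\sum_{j\in T}w_j$. *)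

From HB Require Import structures.
From mathcomp Require Import all_boot all_order all_algebra.
Set Implicit Arguments. Unset Strict Implicit. Unset Printing Implicit Defensive.
Import Order.TTheory GRing.Theory Num.Theory.

Definition wvg (I : finType) (q : nat) (w : I -> nat) (S : {set I}) : bool :=
  (q <= \sum_(j in S) w j)%N.

Definition ssindex (I : finType) (q : nat) (w : I -> nat) (j : I) : rat :=
  (\sum_(X : {set I} | j \in X)
     (((#|X|.-1)`! * (#|I| - #|X|)`!)%:R / (#|I|`!)%:R) *
     ((wvg q w X)%:R - (wvg q w (X :\ j))%:R))%R.

(* Player set of the merged game: the players outside T, plus one new
   player &T (represented by None). *)
Definition merged_players (I : finType) (T : {set I}) : finType :=
  option {j : I | j \notin T}.

Definition merged_weight (I : finType) (T : {set I}) (w : I -> nat)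
  (p : merged_players T) : nat :=
  match p with
  | None => \sum_(j in T) w j
  | Some j => w (val j)
  end.

(* The game v of the theorem: players 0..k-1 have weight 8 a_j,
   players k, k+1, k+2 (i.e. n-2, n-1, n in 1-based numbering) weight 1. *)
Definition thm_weight (k : nat) (a : 'I_k -> nat) (i : 'I_k.+3) : nat :=
  match (insub (val i) : option 'I_k) with
  | Some j => 8 * a j
  | None => 1
  end.

Definition thm_quota (k : nat) (a : 'I_k -> nat) : nat :=
  4 * (\sum_(j < k) a j) + 2.

From HB Require Import structures.
From mathcomp Require Import all_boot all_order all_algebra.
From mathcomp Require Import zify ring.
Import Order.TTheory GRing.Theory Num.Theory.
Set Implicit Arguments. Unset Strict Implicit. Unset Printing Implicit Defensive.
Local Open Scope ring_scope.

(* In v all players outside the k heavy ones have weight 1,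
   so the index of a light player p only depends, for each set S of heavy
   players, on how many light players join S.  Writing coalitions as
   "heavy part S + light part U" (sum_sets_split) and counting U by size
   (sum_subsets_by_card) gives a closed formula for the index of p
   (ssindex_light_players) valid for any game of this shape.  It applies to
   v (3 light players, p of weight 1) and to the merged game (2 light
   players, &T of weight 2).  Parity of the quota 4A + 2 then shows that
   only balanced S (2 * sum_S a = A) contribute, giving
     phi_(n-1) + phi_n = sum over balanced S of 4 ss_coef (k+3) (|S|+1),
     phi_&T          = sum over balanced S of
                         ss_coef (k+2) |S| + ss_coef (k+2) (|S|+1).
   The termwise strict inequality between these coefficients
   (ss_coef_merge_gain, an AM-GM estimate) turns the comparison of the two
   sums into the existence of a balanced S, i.e. of an equal partition. *)

Definition pivotal (q t c : nat) : bool := (t < q <= t + c)%N.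

Definition ss_coef (N s : nat) : rat := (s`! * (N - s.+1)`!)%:R / (N`!)%:R.

Lemma ssindex_others (I : finType) (q : nat) (w : I -> nat) (p : I) :
  ssindex q w p = \sum_(Y : {set I} | p \notin Y)
    ss_coef #|I| #|Y| * (pivotal q (\sum_(i in Y) w i) (w p))%:R.
Proof.
rewrite /ssindex (reindex_onto (fun Y => p |: Y) (fun X => X :\ p)) /=; last first.
  by move=> X pX; rewrite setD1K.
apply: eq_big => [Y | Y /andP[_ /eqP YE]].
  rewrite setU11 /=; apply/eqP/idP => [<- | /setU1K //]; exact/negbT/setD11.
have pY : p \notin Y by rewrite -YE setD11.
rewrite setU1K // cardsU1 pY add1n; congr (_ * _).
rewrite /wvg big_setU1 //= /pivotal; case: leqP => [le_qt | lt_tq].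
  by rewrite (leq_trans le_qt (leq_addl _ _)) subrr.
by rewrite subr0 addnC.
Qed.

Lemma sum_subsets_by_card (V : nmodType) (T : finType) (B : {set T})
    (G : nat -> V) :
  \sum_(U : {set T} | U \subset B) G #|U|
    = \sum_(i < #|B|.+1) G i *+ 'C(#|B|, i).
Proof.
rewrite (partition_big (fun U : {set T} => inord #|U| : 'I_#|B|.+1) xpredT) //=.
apply: eq_bigr => i _; rewrite -cards_draws -sumr_const.
have sizeU (U : {set T}) :
    U \subset B -> (inord #|U| : 'I_#|B|.+1) = #|U| :> nat.
  by move=> UB; rewrite inordK // ltnS subset_leq_card.
apply: eq_big => [U | U /andP[UB /eqP iE]]; last by rewrite -iE sizeU.
rewrite inE; case UB: (U \subset B) => //=.
apply/eqP/eqP => [<- | iE]; first exact/esym/sizeU.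
by apply: val_inj; exact: etrans (sizeU U UB) iE.
Qed.

Section SplitCoalitions.
Variables (I J : finType) (g : J -> I).
Hypothesis g_inj : injective g.
Local Notation outside := (~: (g @: setT)).

Lemma sum_sets_split (V : nmodType) (F : {set I} -> V) :
  \sum_(X : {set I}) F X =
  \sum_(S : {set J}) \sum_(U : {set I} | U \subset outside) F (g @: S :|: U).
Proof.
rewrite (partition_big (fun X : {set I} => g @^-1: X) xpredT) //=.
apply: eq_bigr => S _.
rewrite (reindex_onto (fun U => g @: S :|: U) (fun X => X :&: outside)) /=.
  apply: eq_bigl => U; apply/idP/idP => [/andP[_ /eqP <-] | U_out].
    exact: subsetIr.
  have iU_out i : i \in U -> i \notin g @: setT.
    by move=> iU; move/subsetP: U_out => /(_ _ iU); rewrite inE.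
  apply/andP; split; apply/eqP/setP => i; rewrite !inE.
    rewrite mem_imset //; case: (boolP (i \in S)) => //= iS.
    by apply/negP => /iU_out; rewrite imset_f.
  case: (boolP (i \in U)) => [iU | _]; first by rewrite iU_out ?orbT.
  by rewrite orbF; apply/negP => /andP[/imsetP[j _ ->]]; rewrite imset_f.
move=> X /eqP <-; apply/setP => i; rewrite !inE.
case: (boolP (i \in g @: setT)) => [/imsetP[j _ ->] | i_out] /=.
  by rewrite mem_imset // inE andbF orbF.
rewrite andbT orb_idl // => /imsetP[j _ iE].
by move: i_out; rewrite iE imset_f.
Qed.

Lemma disjoint_split (S : {set J}) (U : {set I}) :
  U \subset outside -> [disjoint g @: S & U].
Proof.
move=> U_out; rewrite disjoint_sym disjoints_subset (subset_trans U_out) //.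
by rewrite setCS imsetS ?subsetT.
Qed.

Lemma card_split (S : {set J}) (U : {set I}) :
  U \subset outside -> #|g @: S :|: U| = (#|S| + #|U|)%N.
Proof.
move=> U_out; rewrite cardsU card_imset //.
by rewrite (disjoint_setI0 (disjoint_split S U_out)) cards0 subn0.
Qed.

Lemma weight_split (w : I -> nat) (S : {set J}) (U : {set I}) :
  U \subset outside ->
  (\sum_(i in g @: S :|: U) w i = \sum_(j in S) w (g j) + \sum_(i in U) w i)%N.
Proof.
move=> U_out; rewrite (eq_bigl [predU (g @: S) & U]); last by move=> i; rewrite !inE.
by rewrite bigU ?disjoint_split // big_imset //= => x y _ _ /g_inj.
Qed.

End SplitCoalitions.

(* The index of a player p in a game where every other player outside the
   image of g has weight 1: only the size of the light part of a coalition
   matters, so the light players are counted with binomial multiplicities.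
   Here r is the number of light players other than p. *)
Section LightPlayers.
Variables (I J : finType) (g : J -> I) (q : nat) (w : I -> nat) (p : I).
Hypotheses (g_inj : injective g) (p_light : p \notin g @: setT).
Hypothesis w_light : forall i, i \notin g @: setT -> i != p -> w i = 1%N.

Lemma ssindex_light_players :
  let r := (#|I| - #|J|).-1 in
  ssindex q w p = \sum_(S : {set J}) \sum_(i < r.+1)
    ss_coef #|I| (#|S| + i)
      * (pivotal q (\sum_(j in S) w (g j) + i) (w p))%:R *+ 'C(r, i).
Proof.
move=> r; rewrite ssindex_others big_mkcond (sum_sets_split g_inj) /=.
apply: eq_bigr => S _; rewrite -big_mkcondr /=.
have p_notin U : (p \in g @: S :|: U) = (p \in U).
  rewrite inE; case: imsetP => // -[j _ pE].
  by move: p_light; rewrite pE imset_f.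
have card_light : #|~: (g @: setT) :\ p| = r.
  have := cardsC (g @: setT); rewrite card_imset // cardsT.
  have := cardsD1 p (~: (g @: setT)); rewrite in_setC p_light /r; lia.
pose G s := ss_coef #|I| (#|S| + s) * (pivotal q (\sum_(j in S) w (g j) + s) (w p))%:R.
rewrite -card_light -(sum_subsets_by_card _ G).
apply: eq_big => [U | U]; first by rewrite subsetD1 p_notin.
rewrite p_notin => /andP[U_light pU].
rewrite card_split // weight_split //; congr (_ * (pivotal _ (_ + _) _)%:R).
rewrite -sum1_card; apply: eq_bigr => i iU; apply: w_light.
  by rewrite -in_setC (subsetP U_light).
by apply: contraNneq pU => <-.
Qed.

End LightPlayers.

Section MergeLift.
Variables (I J : finType) (T : {set I}) (g : J -> I).
Hypothesis g_avoids : forall j, g j \notin T.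

Definition merge_lift (j : J) : merged_players T := Some (exist _ (g j) (g_avoids j)).

Lemma merge_lift_inj : injective g -> injective merge_lift.
Proof. by move=> g_inj x y [/g_inj]. Qed.

Lemma merge_lift_range (x : {i : I | i \notin T}) :
  (Some x \in merge_lift @: setT) = (val x \in g @: setT).
Proof.
apply/imsetP/imsetP => [[j _ [->]] | [j _ xE]]; exists j => //.
by congr Some; apply: val_inj.
Qed.

Lemma card_merged_players : #|merged_players T| = (#|I| - #|T|).+1.
Proof.
rewrite card_option card_sig; congr _.+1.
by rewrite -(cardsC T) addKn; apply: eq_card => i; rewrite !inE.
Qed.

End MergeLift.

(* It reduces to
   4(m+1)(k-m+1) < (k+2)(k+3), a consequence of the AM-GM inequality. *)
Lemma ss_coef_merge_gain (k m : nat) : (m <= k)%N ->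
  ss_coef k.+3 m.+1 *+ 4 < ss_coef k.+2 m + ss_coef k.+2 m.+1.
Proof.
move=> le_mk; set t := (k - m)%N; have tE : (k.+1 - m)%N = t.+1 by rewrite subSn.
set c : rat := (m`! * t`!)%:R / (k.+2)`!%:R.
have c_gt0 : 0 < c by apply: divr_gt0; rewrite ltr0n ?muln_gt0 !fact_gt0.
have big_coef : ss_coef k.+3 m.+1 = (m.+1 * t.+1)%:R / k.+3%:R * c.
  rewrite /ss_coef /c !subSS tE !factS !natrM; field.
  by rewrite nat1r -!natrD !pnatr_eq0 -lt0n fact_gt0.
have small_coefs : ss_coef k.+2 m + ss_coef k.+2 m.+1 = k.+2%:R * c.
  have -> : k.+2%:R = t.+1%:R + m.+1%:R :> rat by rewrite -natrD /t; congr _%:R; lia.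
  rewrite /ss_coef /c !subSS tE -/t !factS !natrM; field.
  by rewrite nat1r -!natrD !pnatr_eq0 -lt0n fact_gt0.
rewrite big_coef small_coefs -mulrnAl ltr_pM2r // -mulrnAl ltr_pdivrMr ?ltr0n //.
rewrite -natrM -mulr_natr -natrM ltr_nat.
have -> : k = (m + t)%N by rewrite subnKC.
by have [le_mt | lt_tm] := leqP m t; nia.
Qed.

Lemma sum_select_lt (R : numDomainType) (T : finType) (b : pred T)
    (x y : T -> R) :
  (forall t, x t < y t) ->
  (\sum_t (b t)%:R * x t < \sum_t (b t)%:R * y t) <-> exists t, b t.
Proof.
move=> lt_xy; split => [lt_sum | [t bt]].
  have [t bt | none] := pickP b; first by exists t.
  by move: lt_sum; rewrite !big1 ?ltxx // => t _; rewrite none mul0r.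
rewrite (bigD1 t) //= [X in _ < X](bigD1 t) //= bt !mul1r ltr_leD //.
by apply: ler_sum => u _; case: (b u); rewrite ?mul0r ?mul1r // ltW.
Qed.

(* With quota 4A + 2, heavy weight 8s and i further unit weights, a unit
   player is pivotal exactly when i = 1 and 2s = A (parity rules out the
   other cases), ... *)
Lemma pivotal_unit (A s i : nat) : (i <= 2)%N ->
  pivotal (4 * A + 2)%N (8 * s + i)%N 1 = (i == 1%N) && (2 * s == A)%N.
Proof. by rewrite /pivotal => ?; lia. Qed.

Lemma pivotal_pair (A s i : nat) : (i <= 1)%N ->
  pivotal (4 * A + 2)%N (8 * s + i)%N 2 = (2 * s == A)%N.
Proof. by rewrite /pivotal => ?; lia. Qed.

Section SubsetSumGame.
Variables (k : nat) (a : 'I_k -> nat).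
Local Notation A := (\sum_(j < k) a j).
Local Notation q := (thm_quota a).
Local Notation w := (thm_weight a).

Definition heavy_player (j : 'I_k) : 'I_k.+3 := widen_ord (leq_addl 3 k) j.

Definition balanced (S : {set 'I_k}) : bool := (2 * \sum_(j in S) a j == A)%N.

Lemma heavy_player_inj : injective heavy_player.
Proof. by move=> x y /(congr1 val) /= /val_inj. Qed.

Lemma heavy_player_range (i : 'I_k.+3) :
  (i \in heavy_player @: setT) = (i < k)%N.
Proof.
apply/imsetP/idP => [[j _ ->] | lt_ik]; first by rewrite /= ltn_ord.
by exists (Ordinal lt_ik) => //; apply: val_inj.
Qed.

Lemma weight_heavy (S : {set 'I_k}) :
  (\sum_(j in S) w (heavy_player j) = 8 * \sum_(j in S) a j)%N.
Proof.
rewrite big_distrr; apply: eq_bigr => j _ /=.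
rewrite /thm_weight; case: insubP => [u _ uE | ]; last by rewrite /= ltn_ord.
by congr (8 * a _)%N; apply: val_inj.
Qed.

Lemma weight_light (i : 'I_k.+3) : (k <= i)%N -> w i = 1%N.
Proof. by rewrite /thm_weight leqNgt => /negbTE lt_ik; rewrite insubF. Qed.

Lemma ssindex_light (p : 'I_k.+3) : (k <= p)%N ->
  ssindex q w p =
  \sum_(S : {set 'I_k}) (balanced S)%:R * (ss_coef k.+3 #|S|.+1 *+ 2).
Proof.
move=> le_kp.
have p_light : p \notin heavy_player @: setT by rewrite heavy_player_range -leqNgt.
have w_light i : i \notin heavy_player @: setT -> i != p -> w i = 1%N.
  by rewrite heavy_player_range -leqNgt => /weight_light.
rewrite (ssindex_light_players q heavy_player_inj p_light w_light) !card_ord.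
rewrite (_ : (k.+3 - k).-1 = 2)%N; last by lia.
apply: eq_bigr => S _; rewrite weight_heavy weight_light //.
rewrite !big_ord_recr big_ord0 /= !pivotal_unit // -/(balanced S) bin1 addn1.
by case: (balanced S); rewrite /= ?(mulr0, mulr1, mul0r, mul1r, mul0rn, add0r, addr0).
Qed.

Lemma ssindex_merged_pair (T : {set 'I_k.+3}) :
  #|T| = 2%N -> {in T, forall i : 'I_k.+3, k <= i}%N ->
  ssindex q (merged_weight w) (None : merged_players T) =
  \sum_(S : {set 'I_k}) (balanced S)%:R
     * (ss_coef k.+2 #|S| + ss_coef k.+2 #|S|.+1).
Proof.
move=> card_T T_light.
have avoids j : heavy_player j \notin T.
  by apply/negP => /T_light; rewrite leqNgt /= ltn_ord.
pose g := merge_lift avoids.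
have None_light : None \notin g @: setT by apply/imsetP => -[].
have w_light i : i \notin g @: setT -> i != None -> merged_weight w i = 1%N.
  case: i => [x|] // /=; rewrite merge_lift_range heavy_player_range -leqNgt.
  by move=> /weight_light.
have w_None : merged_weight w (None : merged_players T) = 2%N.
  rewrite /= -card_T -sum1_card; apply: eq_bigr => i /T_light; exact: weight_light.
rewrite (ssindex_light_players q (merge_lift_inj heavy_player_inj) None_light w_light).
rewrite card_merged_players card_T !card_ord (_ : (k.+3 - 2).+1 - k = 2)%N; last by lia.
apply: eq_bigr => S _; rewrite weight_heavy w_None.
rewrite !big_ord_recr big_ord0 /= !pivotal_pair // -/(balanced S) addn1.
by case: (balanced S); rewrite /= ?(mulr0, mulr1, mul0r, mul1r, mul0rn, add0r, addr0, addn0).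
Qed.

Lemma balancedE (S : {set 'I_k}) :
  balanced S = (\sum_(j in S) a j == \sum_(j in ~: S) a j)%N.
Proof.
rewrite /balanced [X in _ == X](bigID (mem S)) /= mul2n -addnn eqn_add2l.
by congr (_ == _); apply: eq_bigl => j; rewrite inE.
Qed.

End SubsetSumGame.

Theorem mainTheorem11 (k : nat) (a : 'I_k -> nat)
  (apos : forall j, (0 < a j)%N) :
  let q := thm_quota a in
  let w := thm_weight a in
  let p1 : 'I_k.+3 := inord (k + 1) in
  let p2 : 'I_k.+3 := inord (k + 2) in
  let T : {set 'I_k.+3} := [set p1; p2] in
  (ssindex q w p1 + ssindex q w p2 <
     ssindex q (merged_weight w) (None : merged_players T))%R
  <-> exists P : {set 'I_k}, \sum_(j in P) a j = \sum_(j in ~: P) a j.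
Proof.
move=> q w p1 p2 T.
have val_p1 : p1 = (k + 1)%N :> nat by rewrite inordK //; lia.
have val_p2 : p2 = (k + 2)%N :> nat by rewrite inordK //; lia.
have T_light : {in T, forall i : 'I_k.+3, k <= i}%N.
  by move=> i; rewrite !inE => /orP[] /eqP ->; rewrite ?val_p1 ?val_p2 leq_addr.
have card_T : #|T| = 2%N.
  rewrite cards2 (_ : p1 != p2) //.
  by apply/eqP => p12; move: val_p2; rewrite -p12 val_p1; lia.
rewrite !ssindex_light ?val_p1 ?val_p2 ?leq_addr // ssindex_merged_pair //.
rewrite -big_split /=; under eq_bigr do rewrite -mulrDr -mulrnDr.
rewrite sum_select_lt => [|S]; last first.
  by apply: ss_coef_merge_gain; apply: leq_trans (max_card _) _; rewrite card_ord.
split => -[P hP]; exists P; first by apply/eqP; rewrite -balancedE.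
by rewrite balancedE hP.
Qed.
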